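(* The number of bars of a barcode $f$, which equals $n = f|_{(x,y)=(1,1)}$, can be determined from $C^{\wedge}(f)$: if $f, f'$ are barcodes with $C^{\wedge}(f) = C^{\wedge}(f')$, then $f$ and $f'$ have the same number of bars.
   Context: A barcode is a finite formal sum $f = \sum_{i=1}^n x^{\alpha_i}y^{\ell_i}$ with $n\ge 0$, $\alpha_i \in \mathbb{R}$, $\ell_i \in \mathbb{R}_{>0}$ (a finite multiset of bars $x^{\alpha_i}y^{\ell_i}$); its number of bars is $n$. Its $p$-th exterior power ($p\ge1$) is $f^{\wedge p} = \sum_{1\le i_1<\cdots<i_p\le n} x^{\alpha_{i_1}+\cdots+\alpha_{i_p}}y^{\min\{\ell_{i_1},\ldots,\ell_{i_p}\}}$ (zero if $p>n$). Set $C(f) = \sum_i x^{\alpha_i} - \sum_i x^{\alpha_i+\ell_i}$, a finite integer combination of symbols $x^g$, $g\in\mathbb{R}$, and $C^{\wedge}(f) = \sum_{p\ge1} C(f^{\wedge p})z^p$ with $z$ an indeterminate. *)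

From HB Require Import structures.
From mathcomp Require Import all_boot all_order all_algebra.
From mathcomp Require Import reals.
Set Implicit Arguments. Unset Strict Implicit. Unset Printing Implicit Defensive.
Import Order.TTheory GRing.Theory Num.Theory.
Local Open Scope ring_scope.

(* A barcode sum_i x^{alpha_i} y^{ell_i} is represented by the finite
   multiset (list, order irrelevant) of its bars (alpha_i, ell_i). *)
Definition barcode (R : realType) := seq (R * R).

Definition is_barcode (R : realType) (f : barcode R) : bool :=
  all (fun b => 0 < b.2) f.

Definition nbars (R : realType) (f : barcode R) : nat := size f.

(* minimum of a nonempty list (0 on the empty list, never used) *)
Definition seqmin (R : realType) (s : seq R) : R :=
  if s is x :: s' then foldr Num.min x s' else 0.

(* p-th exterior power: one bar x^{sum_{i in S} alpha_i} y^{min_{i in S} ell_i}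
   for each p-element subset S of the indices of bars. *)
Definition ext_pow (R : realType) (f : barcode R) (p : nat) : barcode R :=
  [seq (\sum_(i in A) (nth (0, 0) f (nat_of_ord i)).1,
        seqmin [seq (nth (0, 0) f (nat_of_ord i)).2 | i <- enum A])
  | A : {set 'I_(size f)} <- enum [set A : {set 'I_(size f)} | #|A| == p]].

(* C(f) = sum_i x^{alpha_i} - sum_i x^{alpha_i + ell_i}, as its coefficient
   function g |-> coefficient of x^g (an integer). *)
Definition Ccoef (R : realType) (f : barcode R) (g : R) : int :=
  (count (fun b => b.1 == g) f)%:Z - (count (fun b => b.1 + b.2 == g) f)%:Z.

(* C^wedge(f) = sum_{p>=1} C(f^{wedge p}) z^p : coefficient of z^p x^g. *)
Definition Cwedge (R : realType) (f : barcode R) (p : nat) (g : R) : int :=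
  Ccoef (ext_pow f p) g.

From mathcomp Require Import all_boot all_order all_algebra.
From mathcomp Require Import reals.
Import Order.TTheory GRing.Theory Num.Theory.

(* The number of bars n is the largest p with C(f^p) <> 0.  Indeed f^p has
   'C(n, p) bars, so it is empty exactly when p > n; and a nonempty barcode
   has C <> 0, because at its smallest birth alpha no bar can die (deaths
   alpha_i + ell_i are strictly larger than alpha_i >= alpha). *)

Local Open Scope ring_scope.

Lemma exists_argmin_seq {disp : Order.disp_t} {T : orderType disp} {A : eqType}
    (F : A -> T) {s : seq A} :
  s != [::] -> exists2 a, a \in s & forall c, c \in s -> (F a <= F c)%O.
Proof.
elim: s => [//|a s IHs] _; have [-> | /IHs[b bs bmin]] := eqVneq s [::].
  by exists a => [|c]; rewrite ?mem_seq1 // => /eqP->.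
have [Fab | Fba] := leP (F a) (F b).
  exists a => [|c]; first exact: mem_head.
  by rewrite inE => /predU1P[-> // | /bmin]; apply: le_trans.
exists b => [|c]; first by rewrite inE bs orbT.
by rewrite inE => /predU1P[-> | /bmin //]; apply: ltW.
Qed.

Section Barcodes.
Variable R : realType.
Implicit Types (f h : barcode R) (p : nat).

Lemma seqmin_gt0 (s : seq R) :
  s != [::] -> all (fun y => 0 < y) s -> 0 < seqmin s.
Proof.
case: s => [//|x s] _ /= /andP[x_gt0]; elim: s => [//|y s IHs] /= /andP[y_gt0 s_gt0].
by rewrite lt_min y_gt0 IHs.
Qed.

Lemma Ccoef_neq0 h : is_barcode h -> h != [::] -> exists g, Ccoef h g != 0.
Proof.
move=> h_bar h_nil; have [b bh bmin] := exists_argmin_seq (fun c : R * R => c.1) h_nil.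
exists b.1; rewrite /Ccoef.
have -> : count (fun c => c.1 + c.2 == b.1) h = 0%N.
  apply/eqP; rewrite -leqn0 leqNgt -has_count; apply/hasPn => c ch.
  rewrite gt_eqF // (le_lt_trans (bmin c ch)) //.
  by rewrite ltrDl (allP h_bar c ch).
by rewrite subr0 eqz_nat -lt0n -has_count; apply/hasP; exists b.
Qed.

Lemma size_ext_pow f p : size (ext_pow f p) = 'C(size f, p).
Proof. by rewrite size_map -cardE card_draws card_ord. Qed.

Lemma ext_pow_eq0 f p : (ext_pow f p == [::]) = (size f < p)%N.
Proof. by rewrite -size_eq0 size_ext_pow -leqn0 leqNgt bin_gt0 -ltnNge. Qed.

Lemma is_barcode_ext_pow f p :
  (0 < p)%N -> is_barcode f -> is_barcode (ext_pow f p).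
Proof.
move=> p_gt0 f_bar; apply/allP => b /mapP[A]; rewrite mem_enum inE => /eqP cardA -> /=.
apply: seqmin_gt0.
  by rewrite -size_eq0 size_map -cardE cardA -lt0n.
apply/allP => y /mapP[i _ ->]; exact/(allP f_bar)/mem_nth.
Qed.

Lemma Cwedge_neq0P f p : is_barcode f -> (0 < p)%N ->
  reflect (exists g, Cwedge f p g != 0) (p <= size f)%N.
Proof.
move=> f_bar p_gt0; apply: (iffP idP) => [p_le | [g]].
  apply: Ccoef_neq0; first exact: is_barcode_ext_pow.
  by rewrite ext_pow_eq0 -leqNgt.
apply: contraNT; rewrite -ltnNge -ext_pow_eq0 => /eqP ext0.
by rewrite /Cwedge ext0 /Ccoef subrr.
Qed.

Lemma nbars_le_Cwedge f f' : is_barcode f -> is_barcode f' ->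
  (forall p g, (0 < p)%N -> Cwedge f p g = Cwedge f' p g) ->
  (nbars f <= nbars f')%N.
Proof.
rewrite /nbars => f_bar f'_bar eqC; have [-> // | n_gt0] := posnP (size f).
apply/(Cwedge_neq0P _ _ f'_bar n_gt0).
have [g] := Cwedge_neq0P _ _ f_bar n_gt0 (leqnn _).
by exists g; rewrite -eqC.
Qed.

End Barcodes.

Theorem proposition8 (R : realType) (f f' : barcode R) :
  is_barcode f -> is_barcode f' ->
  (forall (p : nat) (g : R), (0 < p)%N -> Cwedge f p g = Cwedge f' p g) ->
  nbars f = nbars f'.
Proof.
move=> f_bar f'_bar eqC; apply/eqP; rewrite eqn_leq.
by rewrite !nbars_le_Cwedge // => p g p_gt0; rewrite eqC.
Qed.
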